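(* The law $\mathrm{x}\simeq \mathrm{y}\diamond(\mathrm{y}\diamond(\mathrm{x}\diamond\mathrm{y}))$ does not imply the law $\mathrm{x}\diamond(\mathrm{x}\diamond\mathrm{x})\simeq(\mathrm{x}\diamond\mathrm{x})\diamond\mathrm{x}$; that is, there exists a magma satisfying the first law but not the second.
   Context: A magma is a set with a binary operation $\diamond$; it satisfies a law if the identity holds for all assignments of the variables to elements of the magma. *)

Definition law1 {M : Type} (op : M -> M -> M) : Prop :=
  forall x y : M, x = op y (op y (op x y)).

Definition law2 {M : Type} (op : M -> M -> M) : Prop :=
  forall x : M, op x (op x x) = op (op x x) x.

From Stdlib Require Import List Arith Lia.
Import ListNotations.

(* The model is the free magma on one generator, rewritten once: [x ◇ z] is
   the formal product [x·z], except when [z] is already the formal product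
   [x·(a ◇ x)], in which case [x ◇ z := a].  Since [a ↦ a ◇ x] is injective the
   exception is well defined, and since a reduced product is strictly smaller
   than its right factor, [y ◇ (x ◇ y)] is never reduced; hence
   [y ◇ (y ◇ (x ◇ y)) = y ◇ (y·(x ◇ y)) = x].  On the leaf nothing reduces, so
   [∗ ◇ (∗ ◇ ∗)] and [(∗ ◇ ∗) ◇ ∗] are distinct formal products. *)

Inductive tree : Type := Leaf | Node (l r : tree).

Definition tree_eq_dec : forall s t : tree, {s = t} + {s <> t}.
Proof. decide equality. Defined.

Fixpoint size (t : tree) : nat :=
  match t with Leaf => 1 | Node l r => S (size l + size r) end.

Definition left_child (t : tree) : list tree :=
  match t with Leaf => [] | Node l _ => [l] end.

Lemma size_left_child s t : In s (left_child t) -> size s < size t.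
Proof. destruct t as [|l r]; simpl; [tauto|]. intros [<- | []]. lia. Qed.

(* The candidates for [a] come from [mul_cases] applied to [a ◇ x = w]:
   either [w] is the formal product [a·x], or [x] is a formal product [a·_]. *)
Fixpoint mul (x z : tree) {struct z} : tree :=
  match z with
  | Leaf => Node x Leaf
  | Node x' w =>
      let undoes a := if tree_eq_dec (mul a x') w then true else false in
      if tree_eq_dec x x' then
        match find undoes (left_child w ++ left_child x') with
        | Some a => a
        | None => Node x z
        end
      else Node x z
  end.

Lemma mul_cases x z :
  mul x z = Node x z \/
  exists w, z = Node x w /\ mul (mul x z) x = w /\ size (mul x z) < size z.
Proof.
  destruct z as [|x' w]; [now left|]. simpl.
  destruct (tree_eq_dec x x') as [<-|]; [|now left].
  destruct (find _ _) as [a|] eqn:Hfind; [|now left].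
  right. exists w. apply find_some in Hfind as [Hin Hundoes].
  destruct (tree_eq_dec (mul a x) w) as [Hw|]; [|discriminate].
  split; [reflexivity|]. split; [exact Hw|].
  apply in_app_or in Hin as [Hin|Hin]; apply size_left_child in Hin; simpl; lia.
Qed.

Lemma mul_inj_l x y z : mul x z = mul y z -> x = y.
Proof.
  intros Heq.
  destruct (mul_cases x z) as [Hx|[w [Hzx [_ Hsx]]]];
  destruct (mul_cases y z) as [Hy|[w' [Hzy [_ Hsy]]]].
  - rewrite Hx, Hy in Heq. now injection Heq.
  - rewrite <- Heq, Hx in Hsy. simpl in Hsy. lia.
  - rewrite Heq, Hy in Hsx. simpl in Hsx. lia.
  - rewrite Hzx in Hzy. now injection Hzy.
Qed.

Lemma mul_irreducible x y : mul y (mul x y) = Node y (mul x y).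
Proof.
  destruct (mul_cases y (mul x y)) as [|[w [Hxy [Hw Hsize]]]]; [assumption|].
  exfalso.
  destruct (mul_cases x y) as [Hfree|[w0 [_ [_ Hsize0]]]].
  - (* Then [x = y] and [(x ◇ x·x) ◇ x = x], impossible by size. *)
    rewrite Hfree in Hxy. injection Hxy as <- <-.
    destruct (mul_cases (mul x (mul x x)) x) as [Hfree'|[w3 [_ [_ Hsize']]]].
    + rewrite Hfree' in Hw. apply (f_equal size) in Hw. simpl in Hw. lia.
    + rewrite Hw in Hsize'. lia.
  - rewrite Hxy in Hsize0. simpl in Hsize0. lia.
Qed.

Lemma mul_cancel x y : mul y (Node y (mul x y)) = x.
Proof.
  simpl. destruct (tree_eq_dec y y) as [_|]; [|congruence].
  set (undoes := fun a => if tree_eq_dec (mul a y) (mul x y) then true else false).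
  destruct (find undoes _) as [a|] eqn:Hfind.
  - apply find_some in Hfind as [_ Ha]. unfold undoes in Ha.
    destruct (tree_eq_dec (mul a y) (mul x y)) as [Heq|]; [|discriminate].
    exact (mul_inj_l _ _ _ Heq).
  - exfalso.
    assert (Hin : In x (left_child (mul x y) ++ left_child y)).
    { apply in_or_app.
      destruct (mul_cases x y) as [Hfree|[w [Hy _]]].
      - left. rewrite Hfree. now left.
      - right. rewrite Hy. now left. }
    apply (find_none _ _ Hfind) in Hin. unfold undoes in Hin.
    now destruct (tree_eq_dec (mul x y) (mul x y)).
Qed.

Theorem mainTheorem2 :
  exists (M : Type) (op : M -> M -> M), law1 op /\ ~ law2 op.
Proof.
  exists tree, mul. split.
  - intros x y. now rewrite mul_irreducible, mul_cancel.
  - intros Hlaw2. specialize (Hlaw2 Leaf). vm_compute in Hlaw2. discriminate.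
Qed.
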